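(* Let $s\in\mathbb N$, let $c_s>0$ be a constant, and for $m\in\mathbb N$ let $N_m=\sup\{N\in\mathbb N_0:|Q_N|\le c_sm2^m\}$. Under the complete random design, $$\Pr\Big(\sum_{\boldsymbol k\in Q_{N_m}}Z(\boldsymbol k)\ge2c_sm\Big)\le\frac1{c_sm}.$$
   Context: For $k\in\mathbb N_0$, $k=\sum_{\ell\ge1}a_\ell2^{\ell-1}$ with $a_\ell\in\{0,1\}$, let $\kappa=\{\ell:a_\ell=1\}$. For $\boldsymbol k\in\mathbb N_0^s$ with digit sets $\kappa_1,\dots,\kappa_s$, $\|\boldsymbol\kappa\|_1=\sum_j\sum_{\ell\in\kappa_j}\ell$; $Q_N=\{\boldsymbol k\in\mathbb N_0^s\setminus\{\boldsymbol0\}:\|\boldsymbol\kappa\|_1\le N\}$. Complete random design: random matrices $C_j\in\{0,1\}^{\infty\times m}$ ($j=1,\dots,s$) with all entries i.i.d. uniform on $\{0,1\}$; $Z(\boldsymbol k)=\mathbf 1\{\sum_j\sum_{\ell\in\kappa_j}C_j(\ell,:)=\boldsymbol0\bmod2\}$. *)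

From HB Require Import structures.
From mathcomp Require Import all_boot all_order all_algebra.
Set Implicit Arguments. Unset Strict Implicit. Unset Printing Implicit Defensive.
Import Order.TTheory GRing.Theory Num.Theory.

(* Binary digit a_l (l >= 1) of k = sum_l a_l 2^(l-1). *)
Definition digit (k l : nat) : bool := odd (k %/ 2 ^ l.-1).

(* sum_{l in kappa} l, where kappa = {l >= 1 : a_l = 1}; since k < 2^k,
   all digits with l > k vanish, so the sum over 1 <= l <= k is exact. *)
Definition digit_norm (k : nat) : nat := \sum_(1 <= l < k.+1 | digit k l) l.

Definition kappa_norm (s : nat) (k : 'I_s -> nat) : nat :=
  \sum_(j < s) digit_norm (k j).

(* Every k in N_0^s with ||kappa||_1 <= N has all digits at positions
   <= N, hence k_j < 2^N; so Q_N is represented inside the finite type of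
   vectors with entries in 'I_(2^N) (no element of Q_N is lost). *)
Definition QN (s N : nat) : {set {ffun 'I_s -> 'I_(2 ^ N)}} :=
  [set k : {ffun 'I_s -> 'I_(2 ^ N)} | [exists j, val (k j) != 0%N] &&
           (kappa_norm (fun j => val (k j)) <= N)%N].

(* Complete random design, restricted to the rows l = 1..N (row l is stored
   at index l-1); entries in {0,1} = bool, addition mod 2 = addb.
   Only these rows enter Z(k) for k in Q_N. *)
Definition design (s N m : nat) : finType :=
  {ffun 'I_s -> {ffun 'I_N * 'I_m -> bool}}.

Definition Zk (s N m : nat) (k : 'I_s -> nat) (C : design s N m) : bool :=
  [forall c : 'I_m,
     ~~ \big[addb/false]_(j < s) \big[addb/false]_(i < N | digit (k j) i.+1)
          C j (i, c)].

Definition prob (R : numFieldType) (T : finType) (E : pred T) : R :=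
  (#|[set x | E x]|%:R / #|T|%:R)%R.

(* N is N_m = sup{N in N_0 : |Q_N| <= c m 2^m} (a max, as the set is a
   finite nonempty set of naturals). *)
Definition is_Nm (R : numFieldType) (s : nat) (c : R) (m N : nat) : Prop :=
  ((#|QN s N|%:R <= c * m%:R * 2%:R ^+ m)%R) /\
  forall N', ((#|QN s N'|%:R <= c * m%:R * 2%:R ^+ m)%R) -> (N' <= N)%N.

From HB Require Import structures.
From mathcomp Require Import all_boot all_order all_algebra ring lra.
Import Order.TTheory GRing.Theory Num.Theory.

(* Z(k) says that every column of the design is orthogonal, over GF(2), to the
   digit pattern of k.  For k in Q_N this pattern is nonzero, and distinct k
   have distinct patterns, so the linear maps involved are onto and
   P(Z(k)) = 2^-m, P(Z(k) Z(k')) = 4^-m: the events Z(k) are pairwise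
   independent.  Hence X = sum_k Z(k) has mean |Q_N| 2^-m <= c m and variance
   at most its mean, and Chebyshev's inequality gives
   P(X >= 2cm) <= P(X - EX >= cm) <= cm / (cm)^2. *)

Set Implicit Arguments.
Unset Strict Implicit.
Unset Printing Implicit Defensive.

(* The library does not declare finite functions and pairs into finite
   Z-modules as finZmodTypes. *)
HB.saturate finfun_of.
HB.saturate prod.

Lemma digit0 l : digit 0 l = false.
Proof. by rewrite /digit div0n. Qed.

Lemma digit1 x : digit x 1 = odd x.
Proof. by rewrite /digit divn1. Qed.

Lemma digitS x l : digit x l.+2 = digit x./2 l.+1.
Proof. by rewrite /digit -divn2 -divnMA -expnS. Qed.

Lemma eq_from_digit N x y : x < 2 ^ N -> y < 2 ^ N ->
  (forall i : 'I_N, digit x i.+1 = digit y i.+1) -> x = y.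
Proof.
elim: N x y => [|N IHN] x y; first by rewrite expn0 !ltnS !leqn0 => /eqP-> /eqP->.
rewrite expnS mulnC => ltx lty eq_digit.
have eq_half : x./2 = y./2.
  apply: IHN => [||i]; try by rewrite -divn2 ltn_divLR.
  by rewrite -!digitS; apply: (eq_digit (lift ord0 i)).
by rewrite -[x]odd_double_half -[y]odd_double_half eq_half -!digit1 (eq_digit ord0).
Qed.

Local Open Scope ring_scope.

Definition digit_pattern {J : Type} (N : nat) (k : J -> nat) (j : J) (i : 'I_N) : bool :=
  digit (k j) i.+1.

Section DigitPattern.
Variables (J : finType) (N : nat).

Lemma digit_pattern_neq0 (k : {ffun J -> 'I_(2 ^ N)}) j :
  val (k j) != 0%N -> exists i : 'I_N, digit_pattern (fun j => val (k j)) j i.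
Proof.
move=> kj_neq0; apply/existsP; apply: contraNT kj_neq0 => /existsPn kj0.
apply/eqP/(@eq_from_digit N) => [||i]; [exact: ltn_ord | by rewrite expn_gt0 |].
by rewrite digit0; apply/negbTE/kj0.
Qed.

Lemma digit_pattern_neq (k k' : {ffun J -> 'I_(2 ^ N)}) : k != k' ->
  exists j (i : 'I_N), digit_pattern (fun j => val (k j)) j i
              != digit_pattern (fun j => val (k' j)) j i.
Proof.
move=> neq_kk'; have [j neq_j] : exists j, k j != k' j.
  apply/existsP; apply: contraNT neq_kk' => /existsPn eq_k.
  by apply/eqP/ffunP => j; apply/eqP/negbNE.
exists j; apply/existsP; apply: contraNT neq_j => /existsPn eq_j; apply/eqP/val_inj.
apply: (@eq_from_digit N) => [||i]; try exact: ltn_ord.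
exact/eqP/negbNE/eq_j.
Qed.

End DigitPattern.

Lemma card_ker_surj_additive (T U : finZmodType) (f : T -> U) :
  {morph f : x y / x + y} -> (forall u, exists x, f x = u) ->
  (#|U| * #|[set x | f x == 0%R]|)%N = #|T|.
Proof.
move=> fD f_surj.
have card_fiber u : #|[set x | f x == u]| = #|[set x | f x == 0]|.
  have [y <-] := f_surj u.
  have -> : [set x | f x == f y] = [set x + y | x in [set x | f x == 0]].
    apply/setP => x; rewrite inE; apply/eqP/imsetP => [fx | [z]].
      exists (x - y); last by rewrite subrK.
      by rewrite inE; apply/eqP/(addIr (f y)); rewrite -fD subrK fx add0r.
    by rewrite inE => /eqP fz ->; rewrite fD fz add0r.
  exact/card_imset/addIr.
have -> : #|T| = \sum_(x : T) 1 by rewrite sum1_card.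
rewrite (partition_big f predT) //= -sum_nat_const.
by apply: eq_bigr => u _; rewrite sum1dep_card card_fiber.
Qed.

Section ParityForm.
Variables (J I : finType).
Implicit Types (a b x y : J -> I -> bool).

(* Sums in bool are computed with addb (bool is the field GF(2)), as in Zk. *)
Definition parity a x : bool := \sum_j \sum_(i | a j i) x j i.

Lemma eq_parity a x y : (forall j i, x j i = y j i) -> parity a x = parity a y.
Proof. by move=> eq_xy; apply: eq_bigr => j _; apply: eq_bigr => i _. Qed.

Lemma parityD a x y : parity a (fun j i => x j i + y j i) = parity a x + parity a y.
Proof. by rewrite -big_split; apply: eq_bigr => j _; rewrite big_split. Qed.

Lemma parityMr a x (w : bool) : parity a (fun j i => x j i * w) = parity a x * w.
Proof. by rewrite mulr_suml; apply: eq_bigr => j _; rewrite mulr_suml. Qed.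

Lemma parity_delta a j0 i0 : parity a (fun j i => (j == j0) && (i == i0)) = a j0 i0.
Proof.
rewrite /parity (bigD1 j0) //= [X in _ + X]big1 => [|j /negbTE nj0]; last first.
  by rewrite big1 // => i; rewrite nj0.
rewrite addr0 big_mkcond (bigD1 i0) //= !eqxx [X in _ + X]big1 => [|i /negbTE ni0].
  by rewrite addr0; case: (a j0 i0).
by rewrite ni0; case: (a j0 i).
Qed.

Lemma parity_separate a b : (exists j i, a j i) -> (exists j i, a j i != b j i) ->
  exists x, parity a x && ~~ parity b x.
Proof.
move=> [j1 [i1 a1]] [j2 [i2 neq_ab2]].
pose delta (j0 : J) (i0 : I) j i := (j == j0) && (i == i0).
have [a2 | a2] := boolP (a j2 i2).
  by exists (delta j2 i2); rewrite !parity_delta a2; move: neq_ab2; rewrite a2; case: (b _ _).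
have b2 : b j2 i2 by move: neq_ab2; rewrite (negbTE a2); case: (b _ _).
have [b1 | b1] := boolP (b j1 i1); last by exists (delta j1 i1); rewrite !parity_delta a1 b1.
exists (fun j i => delta j1 i1 j i + delta j2 i2 j i).
by rewrite !parityD !parity_delta a1 b1 b2 (negbTE a2).
Qed.

Variable K : finType.
Implicit Types (C D : {ffun J -> {ffun I * K -> bool}}) (w : {ffun K -> bool}).

Definition column_parity a C : {ffun K -> bool} :=
  [ffun c => parity a (fun j i => C j (i, c))].

Definition outer x w : {ffun J -> {ffun I * K -> bool}} :=
  [ffun j => [ffun p => x j p.1 * w p.2]].

Lemma column_parityD a : {morph column_parity a : C D / C + D}.
Proof.
move=> C D; apply/ffunP => c; rewrite !ffunE -parityD.
by apply: eq_parity => j i; rewrite !ffunE.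
Qed.

Lemma column_parity_outer a x w :
  column_parity a (outer x w) = if parity a x then w else 0.
Proof.
apply/ffunP => c; rewrite !ffunE (_ : parity _ _ = parity a x * w c).
  by case: (parity a x); rewrite ?ffunE.
by rewrite -parityMr; apply: eq_parity => j i; rewrite !ffunE.
Qed.

Lemma card_column_parity_eq0 a : (exists j i, a j i) ->
  (2 ^ #|K| * #|[set C | column_parity a C == 0%R]|)%N
  = #|{ffun J -> {ffun I * K -> bool}}|.
Proof.
move=> [j0 [i0 a0]].
rewrite -(card_ker_surj_additive (column_parityD a)) ?card_ffun ?card_bool // => w.
exists (outer (fun j i => (j == j0) && (i == i0)) w).
by rewrite column_parity_outer parity_delta a0.
Qed.

Lemma card_column_parity2_eq0 a b :
  (exists j i, a j i) -> (exists j i, b j i) -> (exists j i, a j i != b j i) ->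
  (4 ^ #|K| * #|[set C | (column_parity a C == 0%R) && (column_parity b C == 0%R)]|)%N
  = #|{ffun J -> {ffun I * K -> bool}}|.
Proof.
move=> nz_a nz_b neq_ab.
have [x1 /andP[ax1 bx1]] := parity_separate nz_a neq_ab.
have [x2 /andP[bx2 ax2]] : exists x, parity b x && ~~ parity a x.
  by apply: parity_separate nz_b _; have [j [i ?]] := neq_ab; exists j, i; rewrite eq_sym.
pose f C := (column_parity a C, column_parity b C).
have fD : {morph f : C D / C + D} by move=> C D; rewrite /f !column_parityD.
have f_surj uv : exists C, f C = uv.
  exists (outer x1 uv.1 + outer x2 uv.2).
  rewrite /f !column_parityD !column_parity_outer ax1 bx2 (negbTE bx1) (negbTE ax2).
  by rewrite addr0 add0r; case: uv.
rewrite -(card_ker_surj_additive fD f_surj) card_prod card_ffun card_bool -expnMn.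
by congr (_ * _)%N; apply: eq_card => C; rewrite !inE xpair_eqE.
Qed.

End ParityForm.

Lemma sumr_indicator (R : pzSemiRingType) (T : finType) (P : pred T) :
  \sum_x (P x)%:R = #|[set x | P x]|%:R :> R.
Proof.
rewrite -sum1dep_card natr_sum [RHS]big_mkcond.
by apply: eq_bigr => x _; case: (P x).
Qed.

Lemma chebyshev_card (R : realFieldType) (T : finType) (f : T -> R) t : 0 <= t ->
  #|[set x | t <= f x]|%:R * t ^+ 2 <= \sum_x f x ^+ 2.
Proof.
move=> t_ge0; rewrite -sumr_indicator mulr_suml; apply: ler_sum => x _.
have [le_tf | _] := boolP (t <= f x); last by rewrite mul0r sqr_ge0.
by rewrite mul1r ler_sqr ?nnegrE //; apply: le_trans le_tf.
Qed.

Section PairwiseIndependentEvents.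
Variables (R : realFieldType) (T I : finType) (Q : {set I}) (Z : I -> pred T) (p : R).
Hypothesis p_ge0 : 0 <= p.
Hypothesis card_Z : forall k, k \in Q -> #|[set x | Z k x]|%:R = p * #|T|%:R.
Hypothesis card_ZZ : forall k k', k \in Q -> k' \in Q -> k != k' ->
  #|[set x | Z k x && Z k' x]|%:R = p ^+ 2 * #|T|%:R.

Let hits x : R := \sum_(k in Q) (Z k x)%:R.
Let q : R := #|Q|%:R.
Let n : R := #|T|%:R.

Lemma sum_hits : \sum_x hits x = q * p * n.
Proof.
rewrite exchange_big /= (eq_bigr (fun _ => p * n)) => [|k Qk]; last first.
  by rewrite sumr_indicator card_Z.
by rewrite sumr_const -mulr_natl mulrA.
Qed.

Lemma sum_hits_sqr : \sum_x hits x ^+ 2 = q * p * (1 + (q - 1) * p) * n.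
Proof.
have row k : k \in Q ->
    \sum_(k' in Q) #|[set x | Z k x && Z k' x]|%:R = p * n + (q - 1) * (p ^+ 2 * n).
  move=> Qk; rewrite (big_setD1 k) //=.
  have -> : [set x | Z k x && Z k x] = [set x | Z k x] by apply/setP => x; rewrite !inE andbb.
  rewrite card_Z // (eq_bigr (fun _ => p ^+ 2 * n)) => [|k']; last first.
    by rewrite !inE => /andP[neq_k' Qk']; rewrite card_ZZ // eq_sym.
  rewrite sumr_const -[_ *+ #|Q :\ k|]mulr_natr /q (cardsD1 k Q) Qk add1n -natr1 /n.
  ring.
transitivity (\sum_(k in Q) \sum_(k' in Q) (#|[set x | Z k x && Z k' x]|%:R : R)).
  under eq_bigr do rewrite /hits expr2 mulr_suml.
  rewrite exchange_big; apply: eq_bigr => k _; under eq_bigr do rewrite mulr_sumr.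
  rewrite exchange_big; apply: eq_bigr => k' _; rewrite -sumr_indicator.
  by apply: eq_bigr => x _; rewrite -natrM mulnb.
by rewrite (eq_bigr _ row) sumr_const -mulr_natl /q; ring.
Qed.

Lemma sum_hits_dev : \sum_x (hits x - q * p) ^+ 2 = q * p * (1 - p) * n.
Proof.
under eq_bigr do rewrite sqrrB.
rewrite !big_split /= sumrN sumrMnl -mulr_suml sum_hits sum_hits_sqr sumr_const.
by rewrite -mulr_natr; ring.
Qed.

Lemma card_hits_tail t : 0 < t -> q * p <= t ->
  #|[set x | 2 * t <= hits x]|%:R * t <= n.
Proof.
move=> t_gt0 qp_le_t.
have tail_sub :
    (#|[set x | (2 * t <= hits x)%R]| <= #|[set x | (t <= hits x - q * p)%R]|)%N.
  by apply/subset_leq_card/subsetP => x; rewrite !inE => tail_x; lra.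
have := chebyshev_card (fun x => hits x - q * p) (ltW t_gt0).
rewrite sum_hits_dev => dev_tail.
have dev_le : q * p * (1 - p) * n <= t * n.
  apply: ler_wpM2r; first exact: ler0n.
  by have := mulr_ge0 (mulr_ge0 (ler0n _ #|Q|) p_ge0) p_ge0; lra.
move: tail_sub; rewrite -(ler_nat R) => /(ler_wpM2r (sqr_ge0 t)).
rewrite -(ler_pM2r t_gt0); nra.
Qed.

End PairwiseIndependentEvents.

Section CompleteRandomDesign.
Variables (s N m : nat).
Implicit Types (k : {ffun 'I_s -> 'I_(2 ^ N)}) (C : design s N m).

Lemma Zk_column_parity (k : 'I_s -> nat) C :
  Zk k C = (column_parity (digit_pattern k) C == 0).
Proof.
apply/forallP/eqP => [Z_C | /ffunP cp0 c].
  by apply/ffunP => c; rewrite !ffunE; apply/negbTE/Z_C.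
by have := cp0 c; rewrite !ffunE; apply: negbT.
Qed.

Lemma QN_digit_pattern_neq0 k :
  k \in QN s N -> exists j (i : 'I_N), digit_pattern (fun j => val (k j)) j i.
Proof.
by rewrite inE => /andP[/existsP[j /digit_pattern_neq0[i pattern_ji]] _]; exists j, i.
Qed.

Lemma card_Zk k : k \in QN s N ->
  (2 ^ m * #|[set C : design s N m | Zk (fun j => val (k j)) C]|)%N = #|design s N m|.
Proof.
move=> /QN_digit_pattern_neq0 /card_column_parity_eq0 <-; rewrite card_ord.
by congr (_ * _)%N; apply: eq_card => C; rewrite !inE Zk_column_parity.
Qed.

Lemma card_Zk2 k k' : k \in QN s N -> k' \in QN s N -> k != k' ->
  (4 ^ m * #|[set C : design s N m |
               Zk (fun j => val (k j)) C && Zk (fun j => val (k' j)) C]|)%N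
  = #|design s N m|.
Proof.
move=> /QN_digit_pattern_neq0 nz_k /QN_digit_pattern_neq0 nz_k' /digit_pattern_neq neq_kk'.
rewrite -(card_column_parity2_eq0 'I_m nz_k nz_k' neq_kk') card_ord.
by congr (_ * _)%N; apply: eq_card => C; rewrite !inE !Zk_column_parity.
Qed.

End CompleteRandomDesign.

Unset Implicit Arguments.

Theorem lemma4 (R : realFieldType) (s : nat) (c : R) (m N : nat) :
  (0 < s)%N -> 0 < c -> (0 < m)%N -> is_Nm s c m N ->
  prob R (fun C : design s N m =>
    2%:R * c * m%:R <= (\sum_(k in QN s N) Zk (fun j => val (k j)) C)%N%:R)
  <= 1 / (c * m%:R).
Proof.
move=> _ c_gt0 m_gt0 [card_QN _].
pose p : R := (2 ^+ m)^-1.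
have card_prob (d b : nat) : (0 < d)%N -> (d ^ m * b)%N = #|design s N m| ->
    b%:R = (d%:R ^+ m)^-1 * #|design s N m|%:R :> R.
  by move=> d_gt0 <-; rewrite natrM natrX mulKf // expf_neq0 // pnatr_eq0 -lt0n.
have card_Z k : k \in QN s N ->
    #|[set C : design s N m | Zk (fun j => val (k j)) C]|%:R = p * #|design s N m|%:R.
  by move=> /card_Zk /card_prob ->.
have card_ZZ k k' : k \in QN s N -> k' \in QN s N -> k != k' ->
    #|[set C : design s N m |
         Zk (fun j => val (k j)) C && Zk (fun j => val (k' j)) C]|%:R
    = p ^+ 2 * #|design s N m|%:R.
  move=> Qk Qk' neq_kk'; rewrite (card_prob 4%N _ isT (card_Zk2 m Qk Qk' neq_kk')).
  by rewrite /p exprVn -exprM mulnC exprM expr2 -natrM.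
have p_ge0 : 0 <= p by rewrite invr_ge0 exprn_ge0.
have qp_le_cm : #|QN s N|%:R * p <= c * m%:R by rewrite ler_pdivrMr ?exprn_gt0.
have cm_gt0 : 0 < c * m%:R by rewrite mulr_gt0 ?ltr0n.
have := card_hits_tail p_ge0 card_Z card_ZZ cm_gt0 qp_le_cm.
rewrite /prob ler_pdivrMr ?ltr0n ?card_gt0; last by apply/card_gt0P; exists 0.
rewrite mul1r ler_pdivlMl // mulrC => tail; apply: le_trans tail.
rewrite ler_pM2l // ler_nat.
by apply/eq_leq/eq_card => C; rewrite !inE natr_sum mulrA.
Qed.
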